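(* Let $H$ be a hypergraph, $k$ a positive integer, and $H_1,H_2$ hypergraphs with $H=H_1\cup H_2$, and let $S$ be a set with $V(H_1)\cap V(H_2)\subseteq S$ and $S\subseteq V(H_1)\cap V(H_2)$. Let $A_1,\dots,A_k\in tr_S(i(H))$ be such that $A_1\cup\dots\cup A_k\supseteq S$. Then the following are equivalent: (1) $f_H^S(A_1,\dots,A_k)=1$; (2) there exist $A_i^j\in tr_S(i(H_j))$ for $i\in[k]$, $j\in[2]$ such that $A_i\subseteq A_i^1\cap A_i^2$ for all $i$, and $f_{H_j}^S(A_1^j,\dots,A_k^j)=1$ for $j=1,2$.
   Context: A hypergraph $H$ has a finite vertex set $V(H)$ and a set $E(H)$ of subsets of $V(H)$. A set of vertices is independent if it contains no edge; $i(H)$ is the family of inclusion-wise maximal independent sets of $H$. $H=H_1\cup H_2$ means $V(H)=V(H_1)\cup V(H_2)$ and $E(H)=E(H_1)\cup E(H_2)$. For a family $\mathcal{F}$, $tr_S(\mathcal{F})=\{F\cap S:F\in\mathcal{F}\}$. For a hypergraph $H$ and $S\subseteq V(H)$, define $f_H^S(A_1,\dots,A_k)=1$ if $A_1\cup\dots\cup A_k\supseteq S$ and there exist $I_1,\dots,I_k\in i(H)$ with $I_1\cup\dots\cup I_k=V(H)$ and $A_i\subseteq I_i$ for all $i$; and $f_H^S(A_1,\dots,A_k)=0$ otherwise. *)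

From mathcomp Require Import all_boot.
Set Implicit Arguments. Unset Strict Implicit. Unset Printing Implicit Defensive.

Section Hyper.
Variable T : finType.

Definition hypergraph (V : {set T}) (E : {set {set T}}) : Prop :=
  forall e, e \in E -> e \subset V.

Definition independent (V : {set T}) (E : {set {set T}}) (I : {set T}) : bool :=
  (I \subset V) && [forall e in E, ~~ (e \subset I)].

Definition maxindep (V : {set T}) (E : {set {set T}}) (I : {set T}) : bool :=
  maxset (independent V E) I.

Definition in_tr_mis (V : {set T}) (E : {set {set T}}) (S A : {set T}) : Prop :=
  exists I, maxindep V E I /\ A = I :&: S.

Definition fHS (V : {set T}) (E : {set {set T}}) (S : {set T}) (k : nat)
  (A : 'I_k -> {set T}) : Prop :=
  S \subset \bigcup_(i < k) A i /\
  exists I : 'I_k -> {set T},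
    (forall i, maxindep V E (I i)) /\ \bigcup_(i < k) I i = V /\
    (forall i, A i \subset I i).
End Hyper.

From mathcomp Require Import all_boot.

Set Implicit Arguments. Unset Strict Implicit. Unset Printing Implicit Defensive.

(* Every edge of H_j lies in V_j, so a set of vertices of H = H_1 ∪ H_2 whose
   traces on V_1 and V_2 are independent in H_1 and H_2 is independent in H.
   (1) ⇒ (2): restrict each I_i of a maximal independent cover of H to V_j
   and extend it to a maximal independent set I_i^j of H_j; these cover V_j.
   (2) ⇒ (1): as V_1 ∩ V_2 ⊆ S, the set A_i ∪ (I_i^1 \ S) ∪ (I_i^2 \ S)
   meets each V_j inside I_i^j, so it is independent in H; its maximal
   extensions cover V, because the A_i cover S and the I_i^j cover V_j. *)

Section Independence.
Variable T : finType.
Implicit Types (S V W X Y A J : {set T}) (E F : {set {set T}}).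

Lemma independentP V E X :
  reflect (X \subset V /\ {in E, forall e : {set T}, ~~ (e \subset X)})
          (independent V E X).
Proof.
by apply: (iffP andP) => -[sXV eX]; split=> //; apply/forall_inP.
Qed.

Lemma maxindep_independent V E X : maxindep V E X -> independent V E X.
Proof. exact: maxsetp. Qed.

Lemma maxindep_exists V E X :
  independent V E X -> exists2 I, maxindep V E I & X \subset I.
Proof. by case/maxset_exists => I; exists I. Qed.

Lemma independentS V E X Y :
  X \subset Y -> independent V E Y -> independent V E X.
Proof.
move=> sXY /independentP[sYV eY]; apply/independentP.
split=> [|e /eY]; first exact: subset_trans sYV.
by apply: contra => /subset_trans; apply.
Qed.

Lemma independent_restrict V E W F X :
  F \subset E -> independent V E X -> independent W F (X :&: W).
Proof.
move=> sFE /independentP[_ eX]; apply/independentP; split; first exact: subsetIr.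
move=> e /(subsetP sFE)/eX; apply: contra => /subset_trans; apply.
exact: subsetIl.
Qed.

Lemma independent_glue V1 E1 V2 E2 X :
  hypergraph V1 E1 -> hypergraph V2 E2 -> X \subset V1 :|: V2 ->
  independent V1 E1 (X :&: V1) -> independent V2 E2 (X :&: V2) ->
  independent (V1 :|: V2) (E1 :|: E2) X.
Proof.
move=> h1 h2 sXV /independentP[_ eX1] /independentP[_ eX2].
apply/independentP; split=> // e; rewrite inE => /orP[eE1 | eE2].
- by apply: contra (eX1 e eE1) => seX; rewrite subsetI seX h1.
- by apply: contra (eX2 e eE2) => seX; rewrite subsetI seX h2.
Qed.

Lemma in_tr_mis_sub V E S A : in_tr_mis V E S A -> A \subset S.
Proof. by case=> I [_ ->]; apply: subsetIr. Qed.

Lemma maxindep_cover V E k (I : 'I_k -> {set T}) :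
  (forall i, maxindep V E (I i)) -> V \subset \bigcup_i I i ->
  \bigcup_i I i = V.
Proof.
move=> mI sVI; apply/eqP; rewrite eqEsubset sVI andbT.
apply/bigcupsP => i _.
by have /independentP[] := maxindep_independent (mI i).
Qed.

Lemma trace_glue_sub (V V' S A J J' : {set T}) :
  V :&: V' \subset S -> J' \subset V' -> A \subset J ->
  (A :|: (J :\: S) :|: (J' :\: S)) :&: V \subset J.
Proof.
move=> sVV'S sJ'V' sAJ; apply/subsetP => v; rewrite !inE => /andP[+ vV].
case/orP => [/orP[/(subsetP sAJ) // | /andP[_ //]] | /andP[/negP vNS vJ']].
by case: vNS; apply: (subsetP sVV'S); rewrite inE vV (subsetP sJ'V').
Qed.

Lemma independent_glue_trace V1 E1 V2 E2 S A J1 J2 :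
  hypergraph V1 E1 -> hypergraph V2 E2 -> V1 :&: V2 \subset S ->
  A \subset J1 :&: J2 -> independent V1 E1 J1 -> independent V2 E2 J2 ->
  independent (V1 :|: V2) (E1 :|: E2) (A :|: (J1 :\: S) :|: (J2 :\: S)).
Proof.
move=> h1 h2 sV12S; rewrite subsetI => /andP[sAJ1 sAJ2] iJ1 iJ2.
have /independentP[sJ1V1 _] := iJ1; have /independentP[sJ2V2 _] := iJ2.
apply: independent_glue => //.
- have sJ1V : J1 \subset V1 :|: V2 by apply: subset_trans sJ1V1 (subsetUl _ _).
  have sJ2V : J2 \subset V1 :|: V2 by apply: subset_trans sJ2V2 (subsetUr _ _).
  rewrite !subUset (subset_trans sAJ1 sJ1V) /=.
  by apply/andP; split; apply: subset_trans (subsetDl _ _) _.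
- exact: independentS (trace_glue_sub sV12S sJ2V2 sAJ1) iJ1.
- apply: independentS iJ2; rewrite setUAC.
  by apply: trace_glue_sub sJ1V1 sAJ2; rewrite setIC.
Qed.

Lemma fHS_restrict V E W F S k (A : 'I_k -> {set T}) :
  F \subset E -> W \subset V -> S \subset W -> (forall i, A i \subset S) ->
  fHS V E S A ->
  exists B : 'I_k -> {set T},
    [/\ forall i, in_tr_mis W F S (B i), forall i, A i \subset B i
      & fHS W F S B].
Proof.
move=> sFE sWV sSW sAS [sSA [I [mI [covI sAI]]]].
have extI i : exists2 J, maxindep W F J & I i :&: W \subset J.
  exact/maxindep_exists/(independent_restrict _ sFE)/maxindep_independent.
have [J mJ sIJ] := fin_all_exists2 extI.
have sAJS i : A i \subset J i :&: S.
  rewrite subsetI sAS andbT; apply: subset_trans (sIJ i).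
  by rewrite subsetI sAI (subset_trans (sAS i)).
exists (fun i => J i :&: S); split=> [i | // | ]; first by exists (J i).
split.
  by apply: subset_trans sSA _; apply/bigcupsP => i _; apply: (bigcup_max i).
exists J; split=> //; split=> [| i]; last exact: subsetIl.
apply: maxindep_cover mJ _; apply/subsetP => v vW.
have : v \in \bigcup_i I i by rewrite covI (subsetP sWV).
case/bigcupP => i _ vI; apply/bigcupP; exists i => //.
by apply: (subsetP (sIJ i)); rewrite inE vI.
Qed.

Lemma fHS_glue V1 E1 V2 E2 S k (A A1 A2 : 'I_k -> {set T}) :
  hypergraph V1 E1 -> hypergraph V2 E2 -> V1 :&: V2 \subset S ->
  (forall i, A i \subset A1 i :&: A2 i) -> S \subset \bigcup_i A i ->
  fHS V1 E1 S A1 -> fHS V2 E2 S A2 -> fHS (V1 :|: V2) (E1 :|: E2) S A.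
Proof.
move=> h1 h2 sV12S sAA sSA [_ [J1 [mJ1 [covJ1 sAJ1]]]] [_ [J2 [mJ2 [covJ2 sAJ2]]]].
pose K i := A i :|: (J1 i :\: S) :|: (J2 i :\: S).
have extK i : exists2 I, maxindep (V1 :|: V2) (E1 :|: E2) I & K i \subset I.
  apply: maxindep_exists; apply: independent_glue_trace => //.
  - exact: subset_trans (sAA i) (setISS (sAJ1 i) (sAJ2 i)).
  - exact: maxindep_independent.
  - exact: maxindep_independent.
have [I mI sKI] := fin_all_exists2 extK.
split=> //; exists I; split=> //; split=> [| i]; last first.
  by apply: subset_trans (sKI i); rewrite /K -setUA subsetUl.
apply: maxindep_cover mI _; apply/subsetP => v.
have vKI i : v \in K i -> v \in \bigcup_j I j.
  by move=> vK; apply/bigcupP; exists i => //; apply: (subsetP (sKI i)).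
case: (boolP (v \in S)) => [/(subsetP sSA)/bigcupP[i _ vA] _ | vNS].
  by apply: (vKI i); rewrite !inE vA.
rewrite inE -covJ1 -covJ2 => /orP[] /bigcupP[i _ vJ];
  by apply: (vKI i); rewrite !inE vNS vJ ?orbT.
Qed.

End Independence.

Theorem mainTheorem10 (T : finType)
  (V : {set T}) (E : {set {set T}})
  (V1 : {set T}) (E1 : {set {set T}})
  (V2 : {set T}) (E2 : {set {set T}})
  (k : nat) (S : {set T}) (A : 'I_k -> {set T}) :
  hypergraph V1 E1 -> hypergraph V2 E2 -> hypergraph V E ->
  0 < k ->
  V = V1 :|: V2 -> E = E1 :|: E2 ->
  V1 :&: V2 \subset S -> S \subset V1 :&: V2 ->
  (forall i, in_tr_mis V E S (A i)) ->
  S \subset \bigcup_(i < k) A i ->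
  (fHS V E S A <->
   exists A1 A2 : 'I_k -> {set T},
     (forall i, in_tr_mis V1 E1 S (A1 i)) /\
     (forall i, in_tr_mis V2 E2 S (A2 i)) /\
     (forall i, A i \subset A1 i :&: A2 i) /\
     fHS V1 E1 S A1 /\ fHS V2 E2 S A2).
Proof.
move=> h1 h2 _ _ -> -> sV12S sSV12 trA sSA.
split=> [fA | [A1 [A2 [_ [_ [sAA [fA1 fA2]]]]]]]; last exact: fHS_glue fA1 fA2.
have sAS i : A i \subset S := in_tr_mis_sub (trA i).
have [A1 [trA1 sAA1 fA1]] := fHS_restrict (subsetUl E1 E2) (subsetUl V1 V2)
  (subset_trans sSV12 (subsetIl _ _)) sAS fA.
have [A2 [trA2 sAA2 fA2]] := fHS_restrict (subsetUr E1 E2) (subsetUr V1 V2)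
  (subset_trans sSV12 (subsetIr _ _)) sAS fA.
exists A1, A2; do 3!split=> //.
by move=> i; rewrite subsetI sAA1 sAA2.
Qed.
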